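(* Consider the following process on a finite vertex set $V=\{1,\dots,p\}$. One maintains a list of cliques $[C_1,\dots,C_m]$ and a set of outstanding vertices $O=V\setminus\bigcup_i C_i$; the associated graph $G$ on $V$ has an edge between two distinct vertices iff they lie in a common $C_i$. Initially the list is a given list of nonempty subsets (for instance a single nonempty subset), and the vertices of $\bigcup_i C_i$ are listed in an order $u_1,\dots,u_r$ whose reverse $[u_r,\dots,u_1]$ is a perfect elimination order of the graph induced by the initial cliques. While $O\ne\emptyset$, a step chooses a clique $C_a$ in the list, a vertex $v\in O$ and a subset $S\subseteq C_a$, and then: if $S$ is a nonempty proper subset of $C_a$, the clique $S\cup\{v\}$ is added to the list; if $S=C_a$, $C_a$ is replaced by $C_a\cup\{v\}$; if $S=\emptyset$, the clique $\{v\}$ is added; finally $v$ is removed from $O$. Let $u_{r+1},\dots,u_p$ be the vertices in the order in which they are added. Then, for any such sequence of choices, $[u_p,u_{p-1},\dots,u_1]$ is a perfect elimination order of the final graph $G$; i.e. the process adds vertices in reverse perfect elimination order.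
   Context: For a graph $G$ on $n$ vertices and an ordering $[v_1,\dots,v_n]$ of its vertices, let $G_i$ be the subgraph induced by $\{v_i,\dots,v_n\}$. The ordering is a perfect elimination order if for every $i$ the set of neighbours of $v_i$ lying in $G_{i+1}$ is complete (pairwise adjacent) in $G_{i+1}$, i.e. $v_i$ is simplicial in $G_i$. *)

From mathcomp Require Import all_boot.
Set Implicit Arguments. Unset Strict Implicit. Unset Printing Implicit Defensive.

Section CliqueProcess.
Variable T : finType.

Definition cover_list (cs : seq {set T}) : {set T} := \bigcup_(C <- cs) C.

Definition clique_graph (cs : seq {set T}) : rel T :=
  fun x y => (x != y) && has (fun C : {set T} => (x \in C) && (y \in C)) cs.

Definition is_peo (V : {set T}) (e : rel T) (s : seq T) : Prop :=
  [/\ uniq s, [set x in s] = V &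
      forall s1 v s2, s = s1 ++ v :: s2 ->
        forall x y, x \in s2 -> y \in s2 -> x != y ->
          e v x -> e v y -> e x y].

Definition update (cs : seq {set T}) (a : nat) (v : T) (S : {set T}) :=
  let C := nth set0 cs a in
  if S == set0 then rcons cs [set v]
  else if S == C then set_nth set0 cs a (C :|: [set v])
  else rcons cs (v |: S).

(* one step of the process; the state is (clique list, vertices in order
   of addition). v must be outstanding, i.e. not in the union of cliques. *)
Inductive step : seq {set T} * seq T -> seq {set T} * seq T -> Prop :=
| Step cs ord a v (S : {set T}) :
    a < size cs -> v \notin cover_list cs -> S \subset nth set0 cs a ->
    step (cs, ord) (update cs a v S, rcons ord v).

Inductive reach : seq {set T} * seq T -> seq {set T} * seq T -> Prop :=
| reach_refl st : reach st st
| reach_step st1 st2 st3 : step st1 st2 -> reach st2 st3 -> reach st1 st3.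

End CliqueProcess.

From mathcomp Require Import all_boot.
Set Implicit Arguments. Unset Strict Implicit. Unset Printing Implicit Defensive.

(* Each step only adds cliques containing the new vertex v and contained in
   v |: C_a, so adjacency between old vertices is unchanged while every
   neighbour of v lies in the old clique C_a. Hence v is simplicial in the new
   graph, and putting it in front of a perfect elimination order of the old
   graph gives one of the new graph. *)

Section CliqueList.
Variable T : finType.
Implicit Types (cs : seq {set T}) (C D : {set T}) (v x y : T).

Lemma in_cover_list x cs : (x \in cover_list cs) = has (fun C => x \in C) cs.
Proof. by rewrite -big_has (big_morph (fun A : {set T} => x \in A) (in_setU x) (in_set0 x)). Qed.

(* Enlarging C to C :|: [set v] in place is, for a monotone property, the same
   as keeping C and appending its enlargement; so all three cases of [update]
   act like appending v |: S. *)
Lemma has_update (P : pred {set T}) cs a v S :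
    (forall C D, C \subset D -> P C -> P D) -> a < size cs ->
  has P (update cs a v S) = has P cs || P (v |: S).
Proof.
move=> Pmono ha; rewrite /update; case: eqP => [->|_]; first by rewrite has_rcons setU0 orbC.
case: eqP => [->|_]; last by rewrite has_rcons orbC.
set C := nth set0 cs a.
have def_cs : cs = take a cs ++ C :: drop a.+1 cs by rewrite -drop_nth // cat_take_drop.
have := Pmono C (v |: C) (subsetUr _ _).
rewrite set_nthE ha [in RHS]def_cs !has_cat /= setUC.
move: (P C) (P (C :|: [set v])) (has P (take a cs)) (has P (drop a.+1 cs)).
by move=> [] [] [] [] // /(_ isT).
Qed.

Lemma clique_graph_mem cs C x y :
  C \in cs -> x \in C -> y \in C -> x != y -> clique_graph cs x y.
Proof. by move=> C_in xC yC xy; rewrite /clique_graph xy; apply/hasP; exists C; rewrite ?xC. Qed.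

Let pair_mono x y D1 D2 :
  D1 \subset D2 -> (x \in D1) && (y \in D1) -> (x \in D2) && (y \in D2).
Proof. by move=> /subsetP sD12 /andP[/sD12 -> /sD12 ->]. Qed.

Section Update.
Variables (cs : seq {set T}) (a : nat) (v : T) (S : {set T}).
Hypotheses (ha : a < size cs) (hv : v \notin cover_list cs)
  (hS : S \subset nth set0 cs a).

Let C := nth set0 cs a.
Let C_in : C \in cs. Proof. exact: mem_nth. Qed.

Lemma cover_list_update : cover_list (update cs a v S) = v |: cover_list cs.
Proof.
apply/setP=> x; rewrite in_setU1 !in_cover_list has_update //; last first.
  by move=> D1 D2 /subsetP; apply.
rewrite in_setU1 orbCA; case: (eqVneq x v) => //= _.
by apply/orb_idr => xS; apply/hasP; exists C => //; apply: (subsetP hS).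
Qed.

Lemma clique_graph_update x y : x != v -> y != v ->
  clique_graph (update cs a v S) x y = clique_graph cs x y.
Proof.
move=> xv yv; rewrite /clique_graph has_update //; last exact: pair_mono.
rewrite !in_setU1 (negbTE xv) (negbTE yv) /=; congr (_ && _).
by apply/orb_idr => /andP[xS yS]; apply/hasP; exists C; rewrite // !(subsetP hS).
Qed.

Lemma clique_graph_update_neighbour x : clique_graph (update cs a v S) v x -> x \in C.
Proof.
rewrite /clique_graph has_update //; last exact: pair_mono.
case/andP=> vx; rewrite !in_setU1 eqxx (eq_sym x) (negbTE vx) /=.
case/orP=> [/hasP[D D_in /andP[vD _]] | /(subsetP hS)//].
by case/negP: hv; rewrite in_cover_list; apply/hasP; exists D.
Qed.

End Update.
End CliqueList.

Lemma is_peo_cons (T : finType) (V : {set T}) (e e' : rel T) s v :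
    v \notin V -> is_peo V e s -> {in V &, e' =2 e} ->
    {in V &, forall x y, x != y -> e' v x -> e' v y -> e' x y} ->
  is_peo (v |: V) e' (v :: s).
Proof.
move=> vV [s_uniq s_V s_peo] e'E v_simpl.
have in_s x : (x \in s) = (x \in V) by rewrite -s_V inE.
split.
- by rewrite /= s_uniq in_s vV.
- by apply/setP=> x; rewrite !inE in_s.
move=> [|w s1] u s2 /=.
  by case=> <- <- x y; rewrite !in_s => xV yV; apply: v_simpl.
case=> _ def_s x y.
have in_s2 z : z \in s2 -> z \in V by rewrite -in_s def_s mem_cat inE => ->; rewrite !orbT.
have uV : u \in V by rewrite -in_s def_s mem_cat inE eqxx orbT.
move=> xs2 ys2 xy; rewrite !e'E // ?in_s2 //.
exact: s_peo def_s x y xs2 ys2 xy.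
Qed.

Section Process.
Variable T : finType.

Definition peo_state (st : seq {set T} * seq T) :=
  is_peo (cover_list st.1) (clique_graph st.1) (rev st.2).

Lemma step_peo_state st st' : step st st' -> peo_state st -> peo_state st'.
Proof.
case=> cs ord a v S ha hv hS; rewrite /peo_state /= rev_rcons cover_list_update //.
have neq_v x : x \in cover_list cs -> x != v by apply: contraTneq => ->.
move=> peo; apply: is_peo_cons peo _ _ => // [x y xV yV | x y xV yV xy vx vy].
  exact: clique_graph_update (neq_v _ xV) (neq_v _ yV).
rewrite clique_graph_update ?neq_v //.
exact: clique_graph_mem (mem_nth set0 ha) (clique_graph_update_neighbour ha hv hS vx)
  (clique_graph_update_neighbour ha hv hS vy) xy.
Qed.

Lemma reach_peo_state st st' : reach st st' -> peo_state st -> peo_state st'.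
Proof. by elim=> // st1 st2 st3 /step_peo_state step12 _ IH /step12. Qed.

End Process.

Theorem theorem15 (T : finType) (cs0 : seq {set T}) (ord0 : seq T)
    (cs : seq {set T}) (ord : seq T) :
  all (fun C : {set T} => C != set0) cs0 ->
  is_peo (cover_list cs0) (clique_graph cs0) (rev ord0) ->
  reach (cs0, ord0) (cs, ord) ->
  cover_list cs = [set: T] ->
  is_peo [set: T] (clique_graph cs) (rev ord).
Proof.
move=> _ peo0 reach_cs cover_cs; rewrite -cover_cs.
exact: reach_peo_state reach_cs peo0.
Qed.
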